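(* Let $G$ be a group and $X$ a conjugacy class of $G$ that generates $G$. Assume there is a rack isomorphism $\varphi:\operatorname{Aff}(p,\alpha)\to X$ for some prime $p$ and some $\alpha\in\mathbb{Z}/p\mathbb{Z}\setminus\{0,1\}$. For $i\in\mathbb{Z}/p\mathbb{Z}$ put $g_i=\varphi(i)$, and put $\gamma=g_0g_1^{-1}$. Then: (1) For all $x,y,z\in\mathbb{Z}/p\mathbb{Z}$ and all integers $k\ge0$: $g_xg_y^{-1}=g_{x+z}g_{y+z}^{-1}$, $g_0g_k^{-1}=\gamma^k$ (with $k$ read modulo $p$ in the index), and $g_x\gamma=\gamma^{\alpha}g_x$ (with $\alpha$ represented by any integer). (2) The derived subgroup $[G,G]$ is cyclic of order $p$ and generated by $\gamma$.
   Context: A rack is a set with a binary operation $\triangleright$ such that each left multiplication $y\mapsto x\triangleright y$ is bijective and $x\triangleright(y\triangleright z)=(x\triangleright y)\triangleright(x\triangleright z)$. A conjugacy class $X$ is a rack with $x\triangleright y=xyx^{-1}$. $\operatorname{Aff}(p,\alpha)$ is the rack $\mathbb{Z}/p\mathbb{Z}$ with $i\triangleright j=(1-\alpha)i+\alpha j$. *)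

From HB Require Import structures.
From mathcomp Require Import all_boot all_algebra.
Set Implicit Arguments. Unset Strict Implicit. Unset Printing Implicit Defensive.
Import GRing.Theory.

Record group := Group {
  carrier :> Type;
  gmul : carrier -> carrier -> carrier;
  gone : carrier;
  ginv : carrier -> carrier;
  gmulA : forall x y z, gmul x (gmul y z) = gmul (gmul x y) z;
  gmul1 : forall x, gmul gone x = x;
  gmulr1 : forall x, gmul x gone = x;
  gmulV : forall x, gmul x (ginv x) = gone;
  gmulVl : forall x, gmul (ginv x) x = gone
}.

Section GroupDefs.
Variable G : group.

Fixpoint gpow (x : G) (n : nat) : G :=
  match n with O => gone G | S m => gmul x (gpow x m) end.

Definition gzpow (x : G) (z : int) : G :=
  match z with Posz n => gpow x n | Negz n => ginv (gpow x n.+1) end.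

Definition is_subgroup (H : G -> Prop) : Prop :=
  H (gone G) /\ (forall x y, H x -> H y -> H (gmul x y)) /\
  (forall x, H x -> H (ginv x)).

Definition gen (S : G -> Prop) : G -> Prop :=
  fun g => forall H, is_subgroup H -> (forall s, S s -> H s) -> H g.

Definition conj (h x : G) : G := gmul (gmul h x) (ginv h).

Definition is_conj_class (X : G -> Prop) : Prop :=
  exists a : G, forall x, X x <-> exists h, x = conj h a.

Definition generates (X : G -> Prop) : Prop := forall g, gen X g.

Definition commutator (x y : G) : G :=
  gmul (gmul (gmul x y) (ginv x)) (ginv y).

Definition derived : G -> Prop :=
  gen (fun c => exists x y, c = commutator x y).

Definition has_order (x : G) (n : nat) : Prop :=
  0 < n /\ gpow x n = gone G /\ (forall k, 0 < k < n -> gpow x k <> gone G).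
End GroupDefs.

(* The affine rack Aff(p, alpha) on Z/pZ (p prime, so Z/pZ = 'F_p). *)
Definition aff_op (p : nat) (alpha : 'F_p) (i j : 'F_p) : 'F_p :=
  ((1 - alpha) * i + alpha * j)%R.

Definition rack_iso (G : group) (X : G -> Prop) (p : nat) (alpha : 'F_p)
    (phi : 'F_p -> G) : Prop :=
  (forall i, X (phi i)) /\
  (forall i j, phi i = phi j -> i = j) /\
  (forall x, X x -> exists i, phi i = x) /\
  (forall i j, phi (aff_op alpha i j) = conj (phi i) (phi j)).

From mathcomp Require Import all_boot all_algebra.
From mathcomp Require Import ring.
Import GRing.Theory.

Set Implicit Arguments.
Unset Strict Implicit.
Unset Printing Implicit Defensive.

(* Write  r(x, y) = g_x g_y^-1  for x, y in Z/pZ.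
   1. The rack law  g_i |> g_k = g_(i |> k)  gives, for every i and k,
      r(i, k |> i) = g_i g_k g_i^-1 g_k^-1 = r(i |> k, k).  Solving for k
      shows  r(a, b) = r(a + s, b + s)  with  s = alpha (b - a) / (1 - alpha);
      since s depends only on b - a, iterating this step translates (a, b) by
      every multiple of s, hence (s <> 0 for a <> b) by every z in Z/pZ.
   2. Translation invariance makes  r  a "difference": r(x,y) r(y,z) = r(x,z),
      so  r(0, k) = gamma^k,  r(0, a) = gamma^a  for integers a, and
      conjugating gamma = r(0,1) by g_x gives  r(x |> 0, x |> 1) = r(0, alpha).
      Injectivity of phi shows that gamma has order exactly p.
   3. The set N = { r(0, j) } = <gamma> is a subgroup, normal because the
      image of phi is the whole conjugacy class X.  The commutator of two
      elements of X is some r(x, y), so a general lemma about generating sets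
      puts every commutator in N; conversely gamma = [g_0, h] for h conjugating
      g_0 to g_1. *)

Section GroupFacts.
Variable G : group.
Local Notation "x ** y" := (gmul x y) (at level 40, left associativity).
Local Notation e := (gone G).

Lemma mulVK (x y : G) : ginv x ** (x ** y) = y.
Proof. by rewrite gmulA gmulVl gmul1. Qed.

Lemma mulKr (x y : G) : x ** y ** ginv y = x.
Proof. by rewrite -gmulA gmulV gmulr1. Qed.

Lemma mulKrV (x y : G) : x ** ginv y ** y = x.
Proof. by rewrite -gmulA gmulVl gmulr1. Qed.

Lemma inv_uniq (x y : G) : x ** y = e -> y = ginv x.
Proof. by move=> h; rewrite -(mulVK x y) h gmulr1. Qed.

Lemma invK (x : G) : ginv (ginv x) = x.
Proof. by symmetry; apply: inv_uniq; rewrite gmulVl. Qed.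

Lemma invM (x y : G) : ginv (x ** y) = ginv y ** ginv x.
Proof. by symmetry; apply: inv_uniq; rewrite gmulA mulKr gmulV. Qed.

Lemma inv1 : ginv e = e.
Proof. by symmetry; apply: inv_uniq; rewrite gmul1. Qed.

Lemma eq_of_mulV (x y : G) : x ** ginv y = e -> x = y.
Proof. by move=> h; rewrite -(mulKrV x y) h gmul1. Qed.

Lemma gen_subgroup (S : G -> Prop) : is_subgroup (gen S).
Proof.
split; first by move=> H [].
split=> [x y hx hy H hH hS | x hx H hH hS]; case: (hH) => _ [hM hV].
  by apply: hM; [apply: hx | apply: hy].
by apply: hV; apply: hx.
Qed.

Lemma subgroup_gpow (H : G -> Prop) x n : is_subgroup H -> H x -> H (gpow x n).
Proof. by move=> [h1 [hM _]] hx; elim: n => //= n IH; exact: hM. Qed.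

Lemma conj_mulV (h u v : G) : conj h u ** ginv (conj h v) = conj h (u ** ginv v).
Proof. by rewrite /conj !invM invK !gmulA mulKrV. Qed.

Lemma conj_conj (h g u : G) : conj h (conj g u) = conj (h ** g) u.
Proof. by rewrite /conj invM !gmulA. Qed.

Lemma commutatorMr (x y z : G) :
  commutator x (y ** z) = commutator x y ** conj y (commutator x z).
Proof. by rewrite /conj /commutator !invM !gmulA !mulKrV. Qed.

Lemma commutatorVr (x y : G) :
  commutator x (ginv y) = conj (ginv y) (ginv (commutator x y)).
Proof. by rewrite /conj /commutator !invM !invK !gmulA gmulVl gmul1. Qed.

Lemma commutator_sym (x y : G) : commutator y x = ginv (commutator x y).
Proof. by rewrite /commutator !invM !invK !gmulA. Qed.

Lemma commutator1r (x : G) : commutator x e = e.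
Proof. by rewrite /commutator gmulr1 gmulV inv1 gmulr1. Qed.

(* For a normal subgroup N and any x, the elements y with [x, y] in N form a
   subgroup; this lets generation arguments run in the second variable. *)
Lemma commutator_subgroup (N : G -> Prop) (x : G) :
  is_subgroup N -> (forall g n, N n -> N (conj g n)) ->
  is_subgroup (fun y => N (commutator x y)).
Proof.
move=> [N1 [NM NV]] Nconj; split; first by rewrite commutator1r.
split=> [y z hy hz | y hy]; first by rewrite commutatorMr; apply: NM; auto.
by rewrite commutatorVr; apply: Nconj; apply: NV.
Qed.

Lemma commutators_in_normal (X N : G -> Prop) :
  generates X -> is_subgroup N -> (forall g n, N n -> N (conj g n)) ->
  (forall s t, X s -> X t -> N (commutator s t)) ->
  forall x y, N (commutator x y).
Proof.
move=> genX Nsub Nconj hXX.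
have hX : forall s y, X s -> N (commutator s y).
  move=> s y Xs; apply: (genX y _ (commutator_subgroup s Nsub Nconj)).
  by move=> t Xt; apply: hXX.
move=> x y; apply: (genX y _ (commutator_subgroup x Nsub Nconj)) => s Xs.
by rewrite -[commutator x s]invK -commutator_sym; apply: Nsub.2.2; apply: hX.
Qed.
End GroupFacts.

Section AffineRack.
Variables (G : group) (p : nat) (alpha : 'F_p) (phi : 'F_p -> G).
Local Open Scope ring_scope.
Hypothesis alpha_neq0 : alpha != 0.
Hypothesis alpha_neq1 : alpha != 1.
Hypothesis phi_rack : forall i j, phi (aff_op alpha i j) = conj (phi i) (phi j).
Local Notation "x ** y" := (gmul x y) (at level 40, left associativity).

Definition ratio (x y : 'F_p) : G := phi x ** ginv (phi y).
Definition gamma : G := ratio 0 1.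

Lemma ratio_diag x : ratio x x = gone G.
Proof. exact: gmulV. Qed.

Lemma ratio_mul x y z : ratio x y ** ratio y z = ratio x z.
Proof. by rewrite /ratio gmulA mulKrV. Qed.

Lemma ratio_inv x y : ginv (ratio x y) = ratio y x.
Proof. by rewrite /ratio invM invK. Qed.

(* Both sides equal g_i g_k g_i^-1 g_k^-1. *)
Lemma ratio_rack i k : ratio i (aff_op alpha k i) = ratio (aff_op alpha i k) k.
Proof. by rewrite /ratio !phi_rack /conj !invM !invK !gmulA. Qed.

Definition step (a b : 'F_p) : 'F_p := alpha * (b - a) / (1 - alpha).

Lemma one_sub_alpha_neq0 : 1 - alpha != 0.
Proof. by rewrite subr_eq0 eq_sym. Qed.

(* One translation step: apply ratio_rack to the unique k with k |> a = b,
   for which a |> k = a + s and k = b + s. *)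
Lemma ratio_step a b : ratio a b = ratio (a + step a b) (b + step a b).
Proof.
have a1 := one_sub_alpha_neq0.
pose k := (b - alpha * a) / (1 - alpha).
have e1 : aff_op alpha k a = b by rewrite /aff_op /k; field.
have e2 : aff_op alpha a k = a + step a b by rewrite /aff_op /k /step; field.
have e3 : k = b + step a b by rewrite /k /step; field.
by have := ratio_rack a k; rewrite e1 e2 e3.
Qed.

(* Since step (a + s) (b + s) = step a b, the step can be repeated n times. *)
Lemma ratio_step_iter n a b :
  ratio a b = ratio (a + n%:R * step a b) (b + n%:R * step a b).
Proof.
elim: n => [|n IH]; first by rewrite !mul0r !addr0.
have step_inv : step (a + n%:R * step a b) (b + n%:R * step a b) = step a b.
  by rewrite /step; congr (alpha * _ / _); ring.
rewrite IH ratio_step step_inv -natr1; congr ratio; ring.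
Qed.

Lemma ratio_translate x y z : ratio x y = ratio (x + z) (y + z).
Proof.
have [->|xy] := eqVneq x y; first by rewrite !ratio_diag.
have s0 : step x y != 0.
  rewrite /step mulf_neq0 ?invr_eq0 ?one_sub_alpha_neq0 // mulf_neq0 //.
  by rewrite subr_eq0 eq_sym.
by have := ratio_step_iter (z / step x y) x y; rewrite natr_Zp divfK.
Qed.

Lemma ratio_from0 x y : ratio x y = ratio 0 (y - x).
Proof. by rewrite (ratio_translate x y (- x)) subrr. Qed.

Lemma ratio_gpow (k : nat) : ratio 0 k%:R = gpow gamma k.
Proof.
elim: k => [|k IH] /=; first by rewrite ratio_diag.
by rewrite -IH (ratio_translate 0 k%:R 1) add0r /gamma ratio_mul natr1.
Qed.

(* The same for integer exponents, via r(0, -m) = r(m, 0) = r(0, m)^-1. *)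
Lemma ratio_gzpow (a : int) : ratio 0 a%:~R = gzpow gamma a.
Proof.
case: a => n /=; first exact: ratio_gpow.
rewrite NegzE mulrNz -[gamma ** _]/(gpow gamma n.+1) -ratio_gpow.
by rewrite ratio_inv [RHS]ratio_from0 sub0r.
Qed.

(* Conjugating gamma by g_x gives r(x |> 0, x |> 1), a translate of r(0, alpha). *)
Lemma conj_gamma x : conj (phi x) gamma = ratio 0 alpha.
Proof.
rewrite /gamma /ratio -conj_mulV -!phi_rack -/(ratio _ _) ratio_from0.
by congr ratio; rewrite /aff_op; ring.
Qed.

Lemma phi_gamma_comm x (a : int) :
  a%:~R = alpha -> phi x ** gamma = gzpow gamma a ** phi x.
Proof. by move=> ha; rewrite -ratio_gzpow ha -(conj_gamma x) /conj mulKrV. Qed.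

Lemma gamma_order :
  prime p -> (forall i j, phi i = phi j -> i = j) -> has_order gamma p.
Proof.
move=> pp phi_inj; split; first exact: prime_gt0.
split; first by rewrite -ratio_gpow pchar_Fp_0 // ratio_diag.
move=> k /andP[k0 kp]; rewrite -ratio_gpow => /eq_of_mulV /phi_inj /eqP.
rewrite eq_sym -(dvdn_pcharf (pchar_Fp pp)) => /(dvdn_leq k0).
by rewrite leqNgt kp.
Qed.
End AffineRack.

Section DerivedGroup.
Variables (G : group) (X : G -> Prop) (p : nat) (alpha : 'F_p) (phi : 'F_p -> G).
Local Open Scope ring_scope.
Hypothesis alpha_neq0 : alpha != 0.
Hypothesis alpha_neq1 : alpha != 1.
Hypothesis X_class : is_conj_class X.
Hypothesis X_gen : generates X.
Hypothesis phi_iso : rack_iso X alpha phi.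
Local Notation ratio := (ratio phi).
Local Notation gamma := (gamma phi).

Let phi_rack := phi_iso.2.2.2.
Let ratio_translate := ratio_translate alpha_neq0 alpha_neq1 phi_rack.
Let ratio_from0 := ratio_from0 alpha_neq0 alpha_neq1 phi_rack.
Let ratio_gpow := ratio_gpow alpha_neq0 alpha_neq1 phi_rack.

(* The cyclic subgroup <gamma>, described as { r(0, j) }. *)
Definition ratios (g : G) : Prop := exists j, g = ratio 0 j.

(* r(x, y) r(y, z) = r(x, z) and r(x, y)^-1 = r(y, x) make <gamma> a subgroup. *)
Lemma ratios_ratio x y : ratios (ratio x y).
Proof. by exists (y - x); apply: ratio_from0. Qed.

Lemma ratios_subgroup : is_subgroup ratios.
Proof.
split; first by exists 0; rewrite ratio_diag.
split=> [_ _ [j ->] [k ->] | _ [j ->]]; last by rewrite ratio_inv; apply: ratios_ratio.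
by rewrite (ratio_translate 0 k j) add0r ratio_mul; apply: ratios_ratio.
Qed.

(* The image of phi is all of X, hence stable under conjugation. *)
Lemma conj_phi g i : exists j, conj g (phi i) = phi j.
Proof.
have [a Ha] := X_class; have [_ [_ [phi_onto _]]] := phi_iso.
have [h ->] := (Ha (phi i)).1 (phi_iso.1 i).
have [j <-] : exists j, phi j = conj g (conj h a).
  by apply: phi_onto; apply/Ha; exists (gmul g h); rewrite conj_conj.
by exists j.
Qed.

(* <gamma> is normal: g r(0, j) g^-1 = r(g |> 0, g |> j) with both points in X. *)
Lemma ratios_normal g n : ratios n -> ratios (conj g n).
Proof.
move=> [j ->]; rewrite /ratio -conj_mulV.
by have [i ->] := conj_phi g 0; have [k ->] := conj_phi g j; apply: ratios_ratio.
Qed.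

Lemma commutator_ratios x y : ratios (commutator x y).
Proof.
apply: (commutators_in_normal X_gen ratios_subgroup ratios_normal) => s t Xs Xt.
have [_ [_ [phi_onto _]]] := phi_iso.
have [i <-] := phi_onto s Xs; have [j <-] := phi_onto t Xt.
by rewrite /commutator -/(conj _ _) -phi_rack; apply: ratios_ratio.
Qed.

(* gamma = [g_0, h] where h conjugates g_0 to g_1. *)
Lemma gamma_commutator : exists x y, gamma = commutator x y.
Proof.
have [a Ha] := X_class.
have [h0 e0] := (Ha (phi 0)).1 (phi_iso.1 0).
have [h1 e1] := (Ha (phi 1)).1 (phi_iso.1 1).
have e : phi 1 = conj (gmul h1 (ginv h0)) (phi 0).
  by rewrite e0 conj_conj mulKrV.
exists (phi 0), (gmul h1 (ginv h0)).
by rewrite /gamma /ratio e /conj /commutator !invM !invK !gmulA.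
Qed.

Lemma derived_gamma g : derived g <-> exists k : nat, g = gpow gamma k.
Proof.
split=> [hg | [k ->]].
  have [j ->] : ratios g.
    by apply: hg ratios_subgroup _ => c [x [y ->]]; apply: commutator_ratios.
  by exists (nat_of_ord j); rewrite -ratio_gpow natr_Zp.
have gamma_derived : derived gamma.
  by move=> H _ hS; apply: hS; apply: gamma_commutator.
exact: subgroup_gpow (gen_subgroup _) gamma_derived.
Qed.
End DerivedGroup.

Theorem mainTheorem4 (G : group) (X : G -> Prop) (p : nat) (alpha : 'F_p)
  (phi : 'F_p -> G) :
  is_conj_class X -> generates X -> prime p ->
  alpha != 0%R -> alpha != 1%R ->
  rack_iso X alpha phi ->
  let gamma := gmul (phi 0%R) (ginv (phi 1%R)) in
  ((forall x y z : 'F_p,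
      gmul (phi x) (ginv (phi y)) = gmul (phi (x + z)%R) (ginv (phi (y + z)%R))) /\
   (forall k : nat, gmul (phi 0%R) (ginv (phi (k%:R)%R)) = gpow gamma k) /\
   (forall (x : 'F_p) (a : int), (a%:~R)%R = alpha ->
      gmul (phi x) gamma = gmul (gzpow gamma a) (phi x))) /\
  ((forall g, derived g <-> exists k : nat, g = gpow gamma k) /\
   has_order gamma p).
Proof.
move=> X_class X_gen pp a0 a1 phi_iso gamma.
have phi_rack := phi_iso.2.2.2.
split.
- split; first exact: ratio_translate a0 a1 phi_rack.
  split; first exact: ratio_gpow a0 a1 phi_rack.
  exact: phi_gamma_comm a0 a1 phi_rack.
- split; first exact: derived_gamma a0 a1 X_class X_gen phi_iso.
  exact: gamma_order a0 a1 phi_rack pp phi_iso.2.1.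
Qed.
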